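(* Let $\mathbb{B}$ be a partial $\sigma^{brdg}$-structure. Then $\mathbb{B}$ is a partial substructure of some square-increasing brdg (one satisfying $x\leqslant x\circ x$) if and only if its $\{\wedge,\vee,0,1,\leqslant\}$-reduct is a partial bounded lattice and there exists a set $\mathcal F$ of prime filters of $\mathbb{B}$, each of which additionally satisfies (a) $a,b\in f$ and $(a,b)\in\mathrm{dom}(\circ^{\mathbb{B}})$ imply $a\circ^{\mathbb{B}}b\in f$, (b) $a\in f$, $a\backslash^{\mathbb{B}}b\in f$ with $(a,b)\in\mathrm{dom}(\backslash^{\mathbb{B}})$ imply $b\in f$, (c) $a/^{\mathbb{B}}b\in f$, $b\in f$ with $(a,b)\in\mathrm{dom}(/^{\mathbb{B}})$ imply $a\in f$, such that $\mathcal F$ satisfies (D), (M$_\circ$), (M$_\backslash$) and (M$_/$): (M$_\circ$) for all $h\in\mathcal F$ and $(a,b)\in\mathrm{dom}(\circ^{\mathbb{B}})$ with $a\circ^{\mathbb{B}}b\in h$ there are $f,g\in\mathcal F$ with $a\in f$, $b\in g$, $R^{\mathbb{B}}(f,g,h)$; (M$_\backslash$) for all $g\in\mathcal F$ and $(a,b)\in\mathrm{dom}(\backslash^{\mathbb{B}})$ with $a\backslash^{\mathbb{B}}b\notin g$ there are $f,h\in\mathcal F$ with $a\in f$, $b\notin h$, $R^{\mathbb{B}}(f,g,h)$; (M$_/$) for all $f\in\mathcal F$ and $(a,b)\in\mathrm{dom}(/^{\mathbb{B}})$ with $a/^{\mathbb{B}}b\notin f$ there are $g,h\in\mathcal F$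 with $b\in g$, $a\notin h$, $R^{\mathbb{B}}(f,g,h)$.
   Context: A brdg is an algebra $\langle A,\wedge,\vee,\circ,\backslash,/,0,1,\leqslant\rangle$ where $\langle A,\wedge,\vee,0,1\rangle$ is a bounded distributive lattice with natural order $\leqslant$ and $\circ,\backslash,/$ are binary operations with $x\circ y\leqslant z\iff y\leqslant x\backslash z\iff x\leqslant z/y$. The language $\sigma^{brdg}$ has binary operation symbols $\wedge,\vee,\circ,\backslash,/$, constants $0,1$ and relation symbol $\leqslant$. A partial $\sigma^{brdg}$-structure $\mathbb{B}$ consists of a nonempty set $B$, for each binary operation symbol $\delta$ a partial function $\delta^{\mathbb{B}}:\mathrm{dom}(\delta^{\mathbb{B}})\to B$ with $\mathrm{dom}(\delta^{\mathbb{B}})\subseteq B^2$, elements $0^{\mathbb{B}},1^{\mathbb{B}}\in B$ and a binary relation $\leqslant^{\mathbb{B}}$ on $B$. It is a partial substructure of $\mathbb{A}$ if $B\subseteq A$, each $\delta^{\mathbb{B}}$ agrees with $\delta^{\mathbb{A}}$ on its domain, constants coincide and $\leqslant^{\mathbb{B}}=\leqslant^{\mathbb{A}}\cap B^2$. The reduct is a partial bounded lattice if $\leqslant^{\mathbb{B}}$ is a partial order with least element $0^{\mathbb{B}}$ and greatest $1^{\mathbb{B}}$, and any defined $a\wedge^{\mathbb{B}}b$ (resp. $a\vee^{\mathbb{B}}b$) is the greatest lower (resp. least upper) bound of $\{a,b\}$ w.r.t. $\leqslant^{\mathbb{B}}$. A prime filter of $\mathbb{B}$ is $f\subseteq B$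 with $1^{\mathbb{B}}\in f$, $0^{\mathbb{B}}\notin f$, $f$ upward closed under $\leqslant^{\mathbb{B}}$, $a,b\in f$ and $a\wedge^{\mathbb{B}}b$ defined imply $a\wedge^{\mathbb{B}}b\in f$, and $a,b\notin f$ and $a\vee^{\mathbb{B}}b$ defined imply $a\vee^{\mathbb{B}}b\notin f$. Condition (D): for all $a,b\in B$ with $a\not\leqslant^{\mathbb{B}}b$ there is $f\in\mathcal F$ with $a\in f$, $b\notin f$. $R^{\mathbb{B}}(f,g,h)$ holds iff: for all $(a,b)\in\mathrm{dom}(\circ^{\mathbb{B}})$, $a\in f,b\in g$ imply $a\circ^{\mathbb{B}}b\in h$; for all $(a,b)\in\mathrm{dom}(\backslash^{\mathbb{B}})$, $a\in f, a\backslash^{\mathbb{B}}b\in g$ imply $b\in h$; for all $(a,b)\in\mathrm{dom}(/^{\mathbb{B}})$, $b/^{\mathbb{B}}a\in f$, $a\in g$ imply $b\in h$. *)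

(** A brdg: bounded distributive lattice with residuated binary operation
    (fusion [comp], left residual [ldiv] = \, right residual [rdiv] = /).
    The relation symbol <= is interpreted as the natural lattice order. *)
Record brdg := {
  car :> Type;
  bmeet : car -> car -> car;
  bjoin : car -> car -> car;
  bcomp : car -> car -> car;
  bldiv : car -> car -> car;
  brdiv : car -> car -> car;
  bzero : car;
  bone : car;
  meet_assoc : forall x y z, bmeet x (bmeet y z) = bmeet (bmeet x y) z;
  join_assoc : forall x y z, bjoin x (bjoin y z) = bjoin (bjoin x y) z;
  meet_comm : forall x y, bmeet x y = bmeet y x;
  join_comm : forall x y, bjoin x y = bjoin y x;
  meet_absorb : forall x y, bmeet x (bjoin x y) = x;
  join_absorb : forall x y, bjoin x (bmeet x y) = x;
  meet_distr : forall x y z, bmeet x (bjoin y z) = bjoin (bmeet x y) (bmeet x z);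
  join_zero : forall x, bjoin x bzero = x;
  meet_one : forall x, bmeet x bone = x;
  residuation : forall x y z,
    (bmeet (bcomp x y) z = bcomp x y <-> bmeet y (bldiv x z) = y) /\
    (bmeet y (bldiv x z) = y <-> bmeet x (brdiv z y) = x)
}.

Definition ble (A : brdg) (x y : A) : Prop := bmeet A x y = x.

Definition square_increasing (A : brdg) : Prop :=
  forall x : A, ble A x (bcomp A x x).

(** A partial sigma^brdg-structure: partial binary operations are
    option-valued; (a,b) is in the domain of an operation iff it returns Some. *)
Record pstruct := {
  pcar :> Type;
  pmeet : pcar -> pcar -> option pcar;
  pjoin : pcar -> pcar -> option pcar;
  pcomp : pcar -> pcar -> option pcar;
  pldiv : pcar -> pcar -> option pcar;
  prdiv : pcar -> pcar -> option pcar;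
  pzero : pcar;
  pone : pcar;
  ple : pcar -> pcar -> Prop
}.

(** [B] is (isomorphic to) a partial substructure of the brdg [A]:
    witnessed by an injective map [e] (identifying B with a subset of A). *)
Definition partial_substructure (B : pstruct) (A : brdg) : Prop :=
  exists e : B -> A,
    (forall x y, e x = e y -> x = y) /\
    (forall a b c, pmeet B a b = Some c -> e c = bmeet A (e a) (e b)) /\
    (forall a b c, pjoin B a b = Some c -> e c = bjoin A (e a) (e b)) /\
    (forall a b c, pcomp B a b = Some c -> e c = bcomp A (e a) (e b)) /\
    (forall a b c, pldiv B a b = Some c -> e c = bldiv A (e a) (e b)) /\
    (forall a b c, prdiv B a b = Some c -> e c = brdiv A (e a) (e b)) /\
    e (pzero B) = bzero A /\
    e (pone B) = bone A /\
    (forall a b, ple B a b <-> ble A (e a) (e b)).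

Definition partial_bounded_lattice (B : pstruct) : Prop :=
  (forall a, ple B a a) /\
  (forall a b, ple B a b -> ple B b a -> a = b) /\
  (forall a b c, ple B a b -> ple B b c -> ple B a c) /\
  (forall a, ple B (pzero B) a) /\
  (forall a, ple B a (pone B)) /\
  (forall a b c, pmeet B a b = Some c ->
     ple B c a /\ ple B c b /\ (forall d, ple B d a -> ple B d b -> ple B d c)) /\
  (forall a b c, pjoin B a b = Some c ->
     ple B a c /\ ple B b c /\ (forall d, ple B a d -> ple B b d -> ple B c d)).

Definition prime_filter (B : pstruct) (f : B -> Prop) : Prop :=
  f (pone B) /\ ~ f (pzero B) /\
  (forall a b, f a -> ple B a b -> f b) /\
  (forall a b c, pmeet B a b = Some c -> f a -> f b -> f c) /\
  (forall a b c, pjoin B a b = Some c -> ~ f a -> ~ f b -> ~ f c).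

Definition closed_filter (B : pstruct) (f : B -> Prop) : Prop :=
  (forall a b c, pcomp B a b = Some c -> f a -> f b -> f c) /\
  (forall a b c, pldiv B a b = Some c -> f a -> f c -> f b) /\
  (forall a b c, prdiv B a b = Some c -> f c -> f b -> f a).

Definition Rrel (B : pstruct) (f g h : B -> Prop) : Prop :=
  (forall a b c, pcomp B a b = Some c -> f a -> g b -> h c) /\
  (forall a b c, pldiv B a b = Some c -> f a -> g c -> h b) /\
  (forall a b c, prdiv B a b = Some c -> f c -> g b -> h a).

Definition condD (B : pstruct) (F : (B -> Prop) -> Prop) : Prop :=
  forall a b, ~ ple B a b -> exists f, F f /\ f a /\ ~ f b.

Definition condMcomp (B : pstruct) (F : (B -> Prop) -> Prop) : Prop :=
  forall h a b c, F h -> pcomp B a b = Some c -> h c ->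
    exists f g, F f /\ F g /\ f a /\ g b /\ Rrel B f g h.

Definition condMldiv (B : pstruct) (F : (B -> Prop) -> Prop) : Prop :=
  forall g a b c, F g -> pldiv B a b = Some c -> ~ g c ->
    exists f h, F f /\ F h /\ f a /\ ~ h b /\ Rrel B f g h.

Definition condMrdiv (B : pstruct) (F : (B -> Prop) -> Prop) : Prop :=
  forall f a b c, F f -> prdiv B a b = Some c -> ~ f c ->
    exists g h, F g /\ F h /\ g b /\ ~ h a /\ Rrel B f g h.

(* (=>) A prime filter P of the square-increasing brdg A traces a prime filter
   {b | e b in P} on B, and since x /\ y <= (x /\ y)(x /\ y) <= xy these traces
   are closed under the partial operations.  (D) and (M) are instances of the
   prime filter theorem in A; e.g. for (M_o), if ab lies in the prime filter
   h, first extend the up-set of a to a prime filter f with f (up b) inside h,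
   then the up-set of b to a prime filter g with f g inside h.
   (<=) The complex algebra of the frame (F, R^B) is a brdg; it is
   square-increasing because the closure conditions (a)-(c) say exactly that
   R^B(f, f, f).  The map b |-> {f in F | b in f} embeds B: (D) makes it
   order-reflecting and the (M) conditions make it preserve the operations. *)

From Stdlib Require Import Classical FunctionalExtensionality PropExtensionality.
From mathcomp Require classical_sets.

Lemma pred_ext (T : Type) (X Y : T -> Prop) : (forall t, X t <-> Y t) -> X = Y.
Proof.
  intro H. apply functional_extensionality. intro t. apply propositional_extensionality, H.
Qed.

Lemma zorn_pred (T : Type) (P : (T -> Prop) -> Prop) :
  (forall C : (T -> Prop) -> Prop, (forall X, C X -> P X) ->
     (forall X Y, C X -> C Y -> (forall t, X t -> Y t) \/ (forall t, Y t -> X t)) ->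
     P (fun t => exists2 X, C X & X t)) ->
  exists M, P M /\ forall N, (forall t, M t -> N t) -> P N -> forall t, N t -> M t.
Proof.
  intro Hchain.
  destruct (@classical_sets.Zorn_bigcup T P) as [M [PM HM]].
  - intros C HC Htot. apply Hchain; [exact HC | exact Htot].
  - exists M. split; [exact PM |].
    intros N MN PN t Nt. apply NNPP. intro nMt.
    apply (HM N); [| exact PN].
    split; [exact MN |]. intro NM. exact (nMt (NM t Nt)).
Qed.

Section BrdgLattice.
Variable A : brdg.
Implicit Types x y z u v : A.

Lemma bmeet_idem x : bmeet A x x = x.
Proof.
  pose proof (meet_absorb A x (bmeet A x x)) as H. rewrite join_absorb in H. exact H.
Qed.

Lemma ble_refl x : ble A x x. Proof. apply bmeet_idem. Qed.

Lemma ble_trans x y z : ble A x y -> ble A y z -> ble A x z.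
Proof.
  unfold ble; intros Hxy Hyz. rewrite <- Hxy at 1. rewrite <- meet_assoc, Hyz. exact Hxy.
Qed.

Lemma ble_antisym x y : ble A x y -> ble A y x -> x = y.
Proof. unfold ble; intros Hxy Hyx. rewrite <- Hxy, meet_comm. exact Hyx. Qed.

Lemma bmeet_lel x y : ble A (bmeet A x y) x.
Proof. unfold ble. rewrite meet_comm, meet_assoc, bmeet_idem. reflexivity. Qed.

Lemma bmeet_ler x y : ble A (bmeet A x y) y.
Proof. unfold ble. rewrite <- meet_assoc, bmeet_idem. reflexivity. Qed.

Lemma ble_bmeet z x y : ble A z x -> ble A z y -> ble A z (bmeet A x y).
Proof. unfold ble; intros Hx Hy. rewrite meet_assoc, Hx, Hy. reflexivity. Qed.

Lemma bjoin_gel x y : ble A x (bjoin A x y). Proof. apply meet_absorb. Qed.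

Lemma bjoin_ger x y : ble A y (bjoin A x y).
Proof. unfold ble. rewrite join_comm. apply meet_absorb. Qed.

Lemma bjoin_le x y z : ble A x z -> ble A y z -> ble A (bjoin A x y) z.
Proof.
  unfold ble; intros Hx Hy.
  rewrite meet_comm, meet_distr, (meet_comm A z x), Hx, (meet_comm A z y), Hy. reflexivity.
Qed.

Lemma bzero_le x : ble A (bzero A) x.
Proof.
  unfold ble. pose proof (meet_absorb A (bzero A) x) as H.
  rewrite join_comm, join_zero in H. exact H.
Qed.

Lemma ble_one x : ble A x (bone A). Proof. apply meet_one. Qed.

Lemma bmeet_join_le x1 x2 a b :
  ble A (bmeet A (bmeet A x1 x2) (bjoin A a b)) (bjoin A (bmeet A x1 a) (bmeet A x2 b)).
Proof.
  rewrite meet_distr. apply bjoin_le.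
  - apply ble_trans with (bmeet A x1 a); [| apply bjoin_gel].
    apply ble_bmeet; [eapply ble_trans; apply bmeet_lel | apply bmeet_ler].
  - apply ble_trans with (bmeet A x2 b); [| apply bjoin_ger].
    apply ble_bmeet; [eapply ble_trans; [apply bmeet_lel | apply bmeet_ler] | apply bmeet_ler].
Qed.

Lemma comp_le_ldiv x y z : ble A (bcomp A x y) z <-> ble A y (bldiv A x z).
Proof. apply (residuation A). Qed.

Lemma comp_le_rdiv x y z : ble A (bcomp A x y) z <-> ble A x (brdiv A z y).
Proof. destruct (residuation A x y z). unfold ble in *. tauto. Qed.

Lemma bcomp_monol x x' y : ble A x x' -> ble A (bcomp A x y) (bcomp A x' y).
Proof.
  intro H. apply comp_le_rdiv. apply ble_trans with x'; [exact H |].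
  apply comp_le_rdiv, ble_refl.
Qed.

Lemma bcomp_monor x y y' : ble A y y' -> ble A (bcomp A x y) (bcomp A x y').
Proof.
  intro H. apply comp_le_ldiv. apply ble_trans with y'; [exact H |].
  apply comp_le_ldiv, ble_refl.
Qed.

Lemma bcomp_mono x x' y y' :
  ble A x x' -> ble A y y' -> ble A (bcomp A x y) (bcomp A x' y').
Proof.
  intros Hx Hy. apply ble_trans with (bcomp A x' y).
  - apply bcomp_monol, Hx.
  - apply bcomp_monor, Hy.
Qed.

Lemma bcomp_ldiv_le x z : ble A (bcomp A x (bldiv A x z)) z.
Proof. apply comp_le_ldiv, ble_refl. Qed.

Lemma bcomp_rdiv_le y z : ble A (bcomp A (brdiv A z y) y) z.
Proof. apply comp_le_rdiv, ble_refl. Qed.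

Lemma bcomp_joinl_le x1 x2 y :
  ble A (bcomp A (bjoin A x1 x2) y) (bjoin A (bcomp A x1 y) (bcomp A x2 y)).
Proof.
  apply comp_le_rdiv, bjoin_le; apply comp_le_rdiv; [apply bjoin_gel | apply bjoin_ger].
Qed.

Lemma bcomp0l_le y : ble A (bcomp A (bzero A) y) (bzero A).
Proof. apply comp_le_rdiv, bzero_le. Qed.

End BrdgLattice.

Record bfilter (A : brdg) (P : A -> Prop) : Prop := {
  bfilter_inhabited : exists x, P x;
  bfilter_up : forall x y, P x -> ble A x y -> P y;
  bfilter_meet : forall x y, P x -> P y -> P (bmeet A x y) }.

Record bprime_filter (A : brdg) (P : A -> Prop) : Prop := {
  bprime_filter_filter :> bfilter A P;
  bprime_filter_zero : ~ P (bzero A);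
  bprime_filter_join : forall x y, P (bjoin A x y) -> P x \/ P y }.

Record bideal (A : brdg) (I : A -> Prop) : Prop := {
  bideal_inhabited : exists x, I x;
  bideal_down : forall x y, I y -> ble A x y -> I x;
  bideal_join : forall x y, I x -> I y -> I (bjoin A x y) }.

Arguments bfilter_inhabited {A P}.
Arguments bfilter_up {A P}.
Arguments bfilter_meet {A P}.
Arguments bprime_filter_zero {A P}.
Arguments bprime_filter_join {A P}.
Arguments bideal_down {A I}.
Arguments bideal_join {A I}.

Section BrdgFilters.
Variable A : brdg.
Implicit Types x y z u v : A.

Definition up_set x : A -> Prop := fun u => ble A x u.
Definition down_set x : A -> Prop := fun u => ble A u x.

Lemma bfilter_up_set x : bfilter A (up_set x).
Proof.
  split; unfold up_set.
  - exists x. apply ble_refl.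
  - intros. eapply ble_trans; eassumption.
  - intros. apply ble_bmeet; assumption.
Qed.

Lemma bideal_down_set x : bideal A (down_set x).
Proof.
  split; unfold down_set.
  - exists x. apply ble_refl.
  - intros. eapply ble_trans; eassumption.
  - intros. apply bjoin_le; assumption.
Qed.

Lemma bideal_zero I : bideal A I -> I (bzero A).
Proof.
  intros [[i Ii] Idown _]. exact (Idown _ _ Ii (bzero_le A i)).
Qed.

Definition adjoin (G : A -> Prop) a : A -> Prop :=
  fun z => exists g, G g /\ ble A (bmeet A g a) z.

Lemma bfilter_adjoin G a : bfilter A G -> bfilter A (adjoin G a).
Proof.
  intros [[g0 Gg0] Gup Gmeet]. split; unfold adjoin.
  - exists (bmeet A g0 a), g0. split; [exact Gg0 | apply ble_refl].
  - intros z z' [g [Gg Hg]] Hz. exists g. split; [exact Gg | eapply ble_trans; eassumption].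
  - intros z1 z2 [g1 [G1 H1]] [g2 [G2 H2]]. exists (bmeet A g1 g2).
    split; [apply Gmeet; assumption |].
    apply ble_bmeet.
    + eapply ble_trans; [| exact H1]. apply ble_bmeet; [| apply bmeet_ler].
      eapply ble_trans; apply bmeet_lel.
    + eapply ble_trans; [| exact H2]. apply ble_bmeet; [| apply bmeet_ler].
      eapply ble_trans; [apply bmeet_lel | apply bmeet_ler].
Qed.

Section PrimeFilterTheorem.
Variables (Fl I : A -> Prop).
Hypotheses (HFl : bfilter A Fl) (HI : bideal A I) (Hdisj : forall x, Fl x -> I x -> False).

(* Zorn is applied to the sets X with [Fl ∪ X] a filter missing [I]: unlike
   the filters containing [Fl], this family also contains the union of the
   empty chain. *)
Let extends_Fl (X : A -> Prop) : Prop :=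
  bfilter A (fun t => X t \/ Fl t) /\ (forall t, X t \/ Fl t -> I t -> False).

Lemma chain_union_pair (C : (A -> Prop) -> Prop) x y :
  (forall X Y, C X -> C Y -> (forall t, X t -> Y t) \/ (forall t, Y t -> X t)) ->
  (exists2 X, C X & X x) \/ Fl x -> (exists2 X, C X & X y) \/ Fl y ->
  (Fl x /\ Fl y) \/ exists2 X, C X & (X x \/ Fl x) /\ (X y \/ Fl y).
Proof.
  intros Htot [[X CX Xx] | Fx] [[Y CY Yy] | Fy]; try tauto.
  - right. destruct (Htot X Y CX CY) as [XY | YX].
    + exists Y; auto.
    + exists X; auto.
  - right. exists X; auto.
  - right. exists Y; auto.
Qed.

Lemma exists_maximal_filter : exists G,
  bfilter A G /\ (forall x, Fl x -> G x) /\ (forall x, G x -> I x -> False) /\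
  forall G', bfilter A G' -> (forall x, G x -> G' x) -> (forall x, G' x -> I x -> False) ->
    forall x, G' x -> G x.
Proof.
  destruct (@zorn_pred A extends_Fl) as [M [[HG HGdisj] Mmax]].
  - intros C HC Htot. split; [split |].
    + destruct HFl as [[f0 Ff0] _ _]. exists f0. right. exact Ff0.
    + intros x y [[X CX Xx] | Fx] Hxy.
      * destruct (bfilter_up (proj1 (HC X CX)) x y (or_introl Xx) Hxy) as [Xy | Fy].
        -- left. exists X; assumption.
        -- right. exact Fy.
      * right. exact (bfilter_up HFl x y Fx Hxy).
    + intros x y Hx Hy.
      destruct (chain_union_pair _ _ _ Htot Hx Hy) as [[Fx Fy] | [X CX [Hx' Hy']]].
      * right. exact (bfilter_meet HFl x y Fx Fy).
      * destruct (bfilter_meet (proj1 (HC X CX)) x y Hx' Hy') as [Xm | Fm].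
        -- left. exists X; assumption.
        -- right. exact Fm.
    + intros t [[X CX Xt] | Ft] It.
      * exact (proj2 (HC X CX) t (or_introl Xt) It).
      * exact (Hdisj t Ft It).
  - exists (fun t => M t \/ Fl t). split; [exact HG | split; [tauto | split; [exact HGdisj |]]].
    intros G' [G'inh G'up G'meet] MG' HG'disj x G'x. left.
    apply (Mmax G'); [intros t Mt; apply MG'; left; exact Mt | | exact G'x].
    assert (HG' : forall t, G' t \/ Fl t -> G' t) by (intros t [H | H]; auto).
    split; [split |].
    + destruct G'inh as [g Gg]. exists g. left. exact Gg.
    + intros s t Hs Hst. left. exact (G'up s t (HG' s Hs) Hst).
    + intros s t Hs Ht. left. exact (G'meet s t (HG' s Hs) (HG' t Ht)).
    + intros t Ht. exact (HG'disj t (HG' t Ht)).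
Qed.

Lemma prime_filter_theorem :
  exists P, bprime_filter A P /\ (forall x, Fl x -> P x) /\ (forall x, P x -> I x -> False).
Proof.
  destruct exists_maximal_filter as [G [HG [FlG [Gdisj Gmax]]]].
  (* Otherwise [adjoin G a] would be a filter missing [I] strictly above [G]. *)
  assert (Hout : forall a, ~ G a -> exists g, G g /\ I (bmeet A g a)).
  { intros a nGa. apply NNPP. intro Hn. apply nGa.
    apply (Gmax (adjoin G a)).
    - apply bfilter_adjoin, HG.
    - intros t Gt. exists t. split; [exact Gt | apply bmeet_lel].
    - intros t [g [Gg Hg]] It. apply Hn. exists g. split; [exact Gg |].
      exact (bideal_down HI _ _ It Hg).
    - destruct (bfilter_inhabited HG) as [g Gg]. exists g. split; [exact Gg | apply bmeet_ler]. }
  exists G. split; [split | split; assumption].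
  - exact HG.
  - intro G0. exact (Gdisj _ G0 (bideal_zero _ HI)).
  - intros a b Gab. apply NNPP. intro Hn.
    destruct (Hout a ltac:(tauto)) as [g1 [G1 I1]].
    destruct (Hout b ltac:(tauto)) as [g2 [G2 I2]].
    apply (Gdisj (bmeet A (bmeet A g1 g2) (bjoin A a b))).
    + apply (bfilter_meet HG); [apply (bfilter_meet HG) |]; assumption.
    + apply (bideal_down HI _ _ (bideal_join HI _ _ I1 I2)). apply bmeet_join_le.
Qed.

End PrimeFilterTheorem.

End BrdgFilters.

Arguments prime_filter_theorem {A Fl I}.

Definition brdg_op (A : brdg) : brdg.
Proof.
  refine {| car := A; bmeet := bmeet A; bjoin := bjoin A;
            bcomp := fun x y => bcomp A y x;
            bldiv := fun x z => brdiv A z x; brdiv := fun z y => bldiv A y z;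
            bzero := bzero A; bone := bone A |};
    [apply meet_assoc | apply join_assoc | apply meet_comm | apply join_comm
    | apply meet_absorb | apply join_absorb | apply meet_distr | apply join_zero
    | apply meet_one |].
  intros x y z. fold (ble A y x) (ble A (bcomp A y x) z) (ble A y (brdiv A z x))
    (ble A x (bldiv A y z)).
  rewrite <- comp_le_ldiv, <- comp_le_rdiv. tauto.
Defined.

Lemma bfilter_op A P : bfilter (brdg_op A) P <-> bfilter A P.
Proof. split; intros []; split; assumption. Qed.

Lemma bprime_filter_op A P : bprime_filter (brdg_op A) P <-> bprime_filter A P.
Proof. split; intros [HP ? ?]; split; try apply bfilter_op; assumption. Qed.

Definition Rfilter (A : brdg) (P Q S : A -> Prop) : Prop :=
  forall u v, P u -> Q v -> S (bcomp A u v).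

Lemma bprime_filter_left_witness {A : brdg} {Q Ph : A -> Prop} (x : A) :
  bfilter A Q -> bprime_filter A Ph -> (forall v, Q v -> Ph (bcomp A x v)) ->
  exists Pf, bprime_filter A Pf /\ Pf x /\ Rfilter A Pf Q Ph.
Proof.
  intros HQ HPh Hx.
  set (I := fun u => exists v, Q v /\ ~ Ph (bcomp A u v)).
  assert (HI : bideal A I).
  { split.
    - destruct (bfilter_inhabited HQ) as [q Qq]. exists (bzero A), q.
      split; [exact Qq |]. intro H. apply (bprime_filter_zero HPh).
      exact (bfilter_up HPh _ _ H (bcomp0l_le A q)).
    - intros u u' [v [Qv Hv]] Hle. exists v. split; [exact Qv |].
      intro H. apply Hv. exact (bfilter_up HPh _ _ H (bcomp_monol A _ _ _ Hle)).
    - intros u1 u2 [v1 [Q1 H1]] [v2 [Q2 H2]]. exists (bmeet A v1 v2).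
      split; [exact (bfilter_meet HQ _ _ Q1 Q2) |]. intro H.
      destruct (bprime_filter_join HPh _ _ (bfilter_up HPh _ _ H (bcomp_joinl_le A _ _ _)))
        as [H' | H'].
      + apply H1. exact (bfilter_up HPh _ _ H' (bcomp_monor A _ _ _ (bmeet_lel A _ _))).
      + apply H2. exact (bfilter_up HPh _ _ H' (bcomp_monor A _ _ _ (bmeet_ler A _ _))). }
  destruct (prime_filter_theorem (bfilter_up_set A x) HI) as [Pf [HPf [xPf Pfdisj]]].
  - intros u Hxu [v [Qv Hv]]. apply Hv.
    exact (bfilter_up HPh _ _ (Hx v Qv) (bcomp_monol A _ _ _ Hxu)).
  - exists Pf. split; [exact HPf | split; [apply xPf, ble_refl |]].
    intros u v Pfu Qv. apply NNPP. intro Hn. apply (Pfdisj u Pfu). exists v. tauto.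
Qed.

Lemma bprime_filter_right_witness {A : brdg} {P Ph : A -> Prop} (y : A) :
  bfilter A P -> bprime_filter A Ph -> (forall u, P u -> Ph (bcomp A u y)) ->
  exists Pg, bprime_filter A Pg /\ Pg y /\ Rfilter A P Pg Ph.
Proof.
  intros HP HPh Hy.
  destruct (@bprime_filter_left_witness (brdg_op A) P Ph y) as [Pg [HPg [Pgy RPg]]].
  - apply bfilter_op, HP.
  - apply bprime_filter_op, HPh.
  - exact Hy.
  - exists Pg. split; [apply bprime_filter_op, HPg |]. split; [exact Pgy |].
    intros u v Pu Pgv. exact (RPg v u Pgv Pu).
Qed.

Lemma bprime_filter_omitting {A : brdg} {P Q : A -> Prop} (z : A) :
  bfilter A P -> bfilter A Q -> (forall u v, P u -> Q v -> ~ ble A (bcomp A u v) z) ->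
  exists Ph, bprime_filter A Ph /\ ~ Ph z /\ Rfilter A P Q Ph.
Proof.
  intros HP HQ Hz.
  set (Fl := fun w => exists u v, P u /\ Q v /\ ble A (bcomp A u v) w).
  assert (HFl : bfilter A Fl).
  { split.
    - destruct (bfilter_inhabited HP) as [p Pp]. destruct (bfilter_inhabited HQ) as [q Qq].
      exists (bcomp A p q), p, q. split; [exact Pp | split; [exact Qq | apply ble_refl]].
    - intros w w' [u [v [Pu [Qv H]]]] Hle. exists u, v.
      split; [exact Pu | split; [exact Qv | eapply ble_trans; eassumption]].
    - intros w1 w2 [u1 [v1 [P1 [Q1 H1]]]] [u2 [v2 [P2 [Q2 H2]]]].
      exists (bmeet A u1 u2), (bmeet A v1 v2).
      split; [exact (bfilter_meet HP _ _ P1 P2) | split; [exact (bfilter_meet HQ _ _ Q1 Q2) |]].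
      apply ble_bmeet.
      + eapply ble_trans; [| exact H1]. apply bcomp_mono; apply bmeet_lel.
      + eapply ble_trans; [| exact H2]. apply bcomp_mono; apply bmeet_ler. }
  destruct (prime_filter_theorem HFl (bideal_down_set A z)) as [Ph [HPh [FlPh Phdisj]]].
  - intros w [u [v [Pu [Qv H]]]] Hw. apply (Hz u v Pu Qv). eapply ble_trans; eassumption.
  - exists Ph. split; [exact HPh | split].
    + intro Phz. exact (Phdisj z Phz (ble_refl A z)).
    + intros u v Pu Qv. apply FlPh. exists u, v.
      split; [exact Pu | split; [exact Qv | apply ble_refl]].
Qed.

Lemma bmeet_le_bcomp {A : brdg} : square_increasing A ->
  forall x y : A, ble A (bmeet A x y) (bcomp A x y).
Proof.
  intros Hsq x y. eapply ble_trans; [apply Hsq |].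
  apply bcomp_mono; [apply bmeet_lel | apply bmeet_ler].
Qed.

Lemma bfilter_bcomp {A : brdg} {P : A -> Prop} : square_increasing A -> bfilter A P ->
  forall x y, P x -> P y -> P (bcomp A x y).
Proof.
  intros Hsq HP x y Px Py.
  exact (bfilter_up HP _ _ (bfilter_meet HP _ _ Px Py) (bmeet_le_bcomp Hsq x y)).
Qed.

Definition representing_filters (B : pstruct) (F : (B -> Prop) -> Prop) : Prop :=
  (forall f, F f -> prime_filter B f /\ closed_filter B f) /\
  condD B F /\ condMcomp B F /\ condMldiv B F /\ condMrdiv B F.

Section Traces.
Variables (B : pstruct) (A : brdg) (e : B -> A).
Hypotheses (e_inj : forall a b, e a = e b -> a = b)
  (e_meet : forall a b c, pmeet B a b = Some c -> e c = bmeet A (e a) (e b))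
  (e_join : forall a b c, pjoin B a b = Some c -> e c = bjoin A (e a) (e b))
  (e_comp : forall a b c, pcomp B a b = Some c -> e c = bcomp A (e a) (e b))
  (e_ldiv : forall a b c, pldiv B a b = Some c -> e c = bldiv A (e a) (e b))
  (e_rdiv : forall a b c, prdiv B a b = Some c -> e c = brdiv A (e a) (e b))
  (e_zero : e (pzero B) = bzero A) (e_one : e (pone B) = bone A)
  (e_le : forall a b, ple B a b <-> ble A (e a) (e b)).

Lemma embedded_partial_bounded_lattice : partial_bounded_lattice B.
Proof.
  split; [| split; [| split; [| split; [| split; [| split]]]]].
  - intro a. apply e_le, ble_refl.
  - intros a b Hab Hba. apply e_inj, ble_antisym; apply e_le; assumption.
  - intros a b c Hab Hbc. apply e_le. eapply ble_trans; apply e_le; eassumption.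
  - intro a. apply e_le. rewrite e_zero. apply bzero_le.
  - intro a. apply e_le. rewrite e_one. apply ble_one.
  - intros a b c H. rewrite !e_le, (e_meet _ _ _ H).
    split; [apply bmeet_lel | split; [apply bmeet_ler |]].
    intros d Hda Hdb. apply e_le. rewrite (e_meet _ _ _ H).
    apply ble_bmeet; apply e_le; assumption.
  - intros a b c H. rewrite !e_le, (e_join _ _ _ H).
    split; [apply bjoin_gel | split; [apply bjoin_ger |]].
    intros d Had Hbd. apply e_le. rewrite (e_join _ _ _ H).
    apply bjoin_le; apply e_le; assumption.
Qed.

Definition trace (P : A -> Prop) : B -> Prop := fun b => P (e b).

Definition trace_filters (f : B -> Prop) : Prop :=
  exists P, bprime_filter A P /\ f = trace P.

Lemma prime_filter_trace P : bprime_filter A P -> prime_filter B (trace P).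
Proof.
  intro HP. unfold trace. split; [| split; [| split; [| split]]].
  - rewrite e_one. destruct (bfilter_inhabited HP) as [x Px].
    exact (bfilter_up HP _ _ Px (ble_one A x)).
  - rewrite e_zero. apply bprime_filter_zero, HP.
  - intros a b Pa Hab. exact (bfilter_up HP _ _ Pa (proj1 (e_le a b) Hab)).
  - intros a b c H Pa Pb. rewrite (e_meet _ _ _ H). exact (bfilter_meet HP _ _ Pa Pb).
  - intros a b c H nPa nPb Pc. rewrite (e_join _ _ _ H) in Pc.
    destruct (bprime_filter_join HP _ _ Pc); contradiction.
Qed.

Lemma closed_filter_trace P : square_increasing A -> bfilter A P -> closed_filter B (trace P).
Proof.
  intros Hsq HP. unfold trace. split; [| split].
  - intros a b c H Pa Pb. rewrite (e_comp _ _ _ H). exact (bfilter_bcomp Hsq HP _ _ Pa Pb).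
  - intros a b c H Pa Pc. rewrite (e_ldiv _ _ _ H) in Pc.
    exact (bfilter_up HP _ _ (bfilter_bcomp Hsq HP _ _ Pa Pc) (bcomp_ldiv_le A _ _)).
  - intros a b c H Pc Pb. rewrite (e_rdiv _ _ _ H) in Pc.
    exact (bfilter_up HP _ _ (bfilter_bcomp Hsq HP _ _ Pc Pb) (bcomp_rdiv_le A _ _)).
Qed.

Lemma Rrel_trace P Q S : bfilter A S -> Rfilter A P Q S -> Rrel B (trace P) (trace Q) (trace S).
Proof.
  intros HS HR. unfold trace. split; [| split].
  - intros a b c H Pa Qb. rewrite (e_comp _ _ _ H). exact (HR _ _ Pa Qb).
  - intros a b c H Pa Qc. rewrite (e_ldiv _ _ _ H) in Qc.
    exact (bfilter_up HS _ _ (HR _ _ Pa Qc) (bcomp_ldiv_le A _ _)).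
  - intros a b c H Pc Qb. rewrite (e_rdiv _ _ _ H) in Pc.
    exact (bfilter_up HS _ _ (HR _ _ Pc Qb) (bcomp_rdiv_le A _ _)).
Qed.

Lemma trace_filters_trace P : bprime_filter A P -> trace_filters (trace P).
Proof. intro HP. exists P. split; [exact HP | reflexivity]. Qed.

Lemma condD_trace : condD B trace_filters.
Proof.
  intros a b Hab.
  destruct (prime_filter_theorem (bfilter_up_set A (e a)) (bideal_down_set A (e b)))
    as [P [HP [aP Pb]]].
  - intros x Hax Hxb. apply Hab, e_le. eapply ble_trans; eassumption.
  - exists (trace P). split; [apply trace_filters_trace, HP |]. unfold trace. split.
    + apply aP, ble_refl.
    + intro Pb'. exact (Pb _ Pb' (ble_refl A _)).
Qed.

Lemma condMcomp_trace : condMcomp B trace_filters.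
Proof.
  intros h a b c [Ph [HPh ->]] H hc. unfold trace in hc. rewrite (e_comp _ _ _ H) in hc.
  destruct (bprime_filter_left_witness (e a) (bfilter_up_set A (e b)) HPh)
    as [Pf [HPf [Pfa R1]]].
  { intros v Hv. exact (bfilter_up HPh _ _ hc (bcomp_monor A _ _ _ Hv)). }
  destruct (bprime_filter_right_witness (e b) HPf HPh) as [Pg [HPg [Pgb R2]]].
  { intros u Pfu. exact (R1 _ _ Pfu (ble_refl A _)). }
  exists (trace Pf), (trace Pg).
  split; [apply trace_filters_trace, HPf | split; [apply trace_filters_trace, HPg |]].
  split; [exact Pfa | split; [exact Pgb | exact (Rrel_trace _ _ _ HPh R2)]].
Qed.

Lemma condMldiv_trace : condMldiv B trace_filters.
Proof.
  intros g a b c [Pg [HPg ->]] H ngc. unfold trace in ngc. rewrite (e_ldiv _ _ _ H) in ngc.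
  destruct (bprime_filter_omitting (e b) (bfilter_up_set A (e a)) HPg)
    as [Ph [HPh [nPhb R1]]].
  { intros u v Hau Pgv Hle. apply ngc. apply (bfilter_up HPg _ _ Pgv).
    apply comp_le_ldiv. eapply ble_trans; [| exact Hle]. apply bcomp_monol, Hau. }
  destruct (bprime_filter_left_witness (e a) HPg HPh) as [Pf [HPf [Pfa R2]]].
  { intros v Pgv. exact (R1 _ _ (ble_refl A _) Pgv). }
  exists (trace Pf), (trace Ph).
  split; [apply trace_filters_trace, HPf | split; [apply trace_filters_trace, HPh |]].
  split; [exact Pfa | split; [exact nPhb | exact (Rrel_trace _ _ _ HPh R2)]].
Qed.

Lemma condMrdiv_trace : condMrdiv B trace_filters.
Proof.
  intros f a b c [Pf [HPf ->]] H nfc. unfold trace in nfc. rewrite (e_rdiv _ _ _ H) in nfc.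
  destruct (bprime_filter_omitting (e a) HPf (bfilter_up_set A (e b)))
    as [Ph [HPh [nPha R1]]].
  { intros u v Pfu Hbv Hle. apply nfc. apply (bfilter_up HPf _ _ Pfu).
    apply comp_le_rdiv. eapply ble_trans; [| exact Hle]. apply bcomp_monor, Hbv. }
  destruct (bprime_filter_right_witness (e b) HPf HPh) as [Pg [HPg [Pgb R2]]].
  { intros u Pfu. exact (R1 _ _ Pfu (ble_refl A _)). }
  exists (trace Pg), (trace Ph).
  split; [apply trace_filters_trace, HPg | split; [apply trace_filters_trace, HPh |]].
  split; [exact Pgb | split; [exact nPha | exact (Rrel_trace _ _ _ HPh R2)]].
Qed.

Lemma trace_filters_representing : square_increasing A -> representing_filters B trace_filters.
Proof.
  intro Hsq. split.
  - intros f [P [HP ->]].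
    exact (conj (prime_filter_trace P HP) (closed_filter_trace P Hsq HP)).
  - exact (conj condD_trace (conj condMcomp_trace (conj condMldiv_trace condMrdiv_trace))).
Qed.

End Traces.

Lemma pred_meet_eq (T : Type) (X Y : T -> Prop) :
  (fun t => X t /\ Y t) = X <-> (forall t, X t -> Y t).
Proof.
  split.
  - intros H t Xt. rewrite <- H in Xt. exact (proj2 Xt).
  - intro H. apply pred_ext. intro t. split; [tauto |]. intro Xt. exact (conj Xt (H t Xt)).
Qed.

Lemma closed_filter_Rrel (B : pstruct) (f : B -> Prop) : closed_filter B f -> Rrel B f f f.
Proof. intros [Hc [Hl Hr]]. split; [exact Hc | split; [exact Hl | exact Hr]]. Qed.

Section ComplexAlgebra.
Variables (B : pstruct) (F : (B -> Prop) -> Prop).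

Definition point : Type := {f : B -> Prop | F f}.

Definition Rpoint (f g h : point) : Prop := Rrel B (proj1_sig f) (proj1_sig g) (proj1_sig h).

Definition cmeet (X Y : point -> Prop) : point -> Prop := fun p => X p /\ Y p.
Definition cjoin (X Y : point -> Prop) : point -> Prop := fun p => X p \/ Y p.
Definition ccomp (X Y : point -> Prop) : point -> Prop :=
  fun h => exists f g, X f /\ Y g /\ Rpoint f g h.
Definition cldiv (X Z : point -> Prop) : point -> Prop :=
  fun g => forall f h, Rpoint f g h -> X f -> Z h.
Definition crdiv (Z Y : point -> Prop) : point -> Prop :=
  fun f => forall g h, Rpoint f g h -> Y g -> Z h.

Lemma complex_residuation X Y Z :
  (cmeet (ccomp X Y) Z = ccomp X Y <-> cmeet Y (cldiv X Z) = Y) /\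
  (cmeet Y (cldiv X Z) = Y <-> cmeet X (crdiv Z Y) = X).
Proof.
  unfold cmeet. rewrite !pred_meet_eq. unfold ccomp, cldiv, crdiv. split; split.
  - intros H g Yg f h R Xf. apply H. exists f, g. tauto.
  - intros H h [f [g [Xf [Yg R]]]]. exact (H g Yg f h R Xf).
  - intros H f Xf g h R Yg. exact (H g Yg f h R Xf).
  - intros H g Yg f h R Xf. exact (H f Xf g h R Yg).
Qed.

Definition complex_brdg : brdg.
Proof.
  refine {| car := point -> Prop; bmeet := cmeet; bjoin := cjoin; bcomp := ccomp;
            bldiv := cldiv; brdiv := crdiv; bzero := fun _ => False; bone := fun _ => True;
            residuation := complex_residuation |};
    intros; apply pred_ext; unfold cmeet, cjoin; tauto.
Defined.

Lemma complex_ble (X Y : complex_brdg) : ble complex_brdg X Y <-> forall p, X p -> Y p.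
Proof. apply pred_meet_eq. Qed.

Definition extent (a : B) : complex_brdg := fun p => proj1_sig p a.

Hypothesis F_filters : forall f, F f -> prime_filter B f /\ closed_filter B f.

Lemma complex_square_increasing : square_increasing complex_brdg.
Proof.
  intro X. apply complex_ble. intros [h Fh] Xh. exists (exist _ h Fh), (exist _ h Fh).
  split; [exact Xh | split; [exact Xh |]].
  apply closed_filter_Rrel, F_filters, Fh.
Qed.

Lemma extent_le (HD : condD B F) a b : ple B a b <-> ble complex_brdg (extent a) (extent b).
Proof.
  rewrite complex_ble. unfold extent. split.
  - intros Hab [f Ff] fa. destruct (F_filters f Ff) as [[_ [_ [Hup _]]] _].
    exact (Hup a b fa Hab).
  - intro H. apply NNPP. intro nab. destruct (HD a b nab) as [f [Ff [fa nfb]]].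
    exact (nfb (H (exist _ f Ff) fa)).
Qed.

Lemma extent_inj (Hlat : partial_bounded_lattice B) (HD : condD B F) a b :
  extent a = extent b -> a = b.
Proof.
  intro Hab. destruct Hlat as [_ [Hanti _]].
  apply Hanti; apply (extent_le HD); rewrite Hab; apply ble_refl.
Qed.

Lemma extent_meet (Hlat : partial_bounded_lattice B) a b c :
  pmeet B a b = Some c -> extent c = bmeet complex_brdg (extent a) (extent b).
Proof.
  intro H. destruct Hlat as [_ [_ [_ [_ [_ [Hm _]]]]]]. destruct (Hm a b c H) as [Hca [Hcb _]].
  apply pred_ext. intros [f Ff]. simpl. unfold cmeet, extent. simpl.
  destruct (F_filters f Ff) as [[_ [_ [Hup [Hmeet _]]]] _].
  split.
  - intro fc. exact (conj (Hup c a fc Hca) (Hup c b fc Hcb)).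
  - intros [fa fb]. exact (Hmeet a b c H fa fb).
Qed.

Lemma extent_join (Hlat : partial_bounded_lattice B) a b c :
  pjoin B a b = Some c -> extent c = bjoin complex_brdg (extent a) (extent b).
Proof.
  intro H. destruct Hlat as [_ [_ [_ [_ [_ [_ Hj]]]]]]. destruct (Hj a b c H) as [Hac [Hbc _]].
  apply pred_ext. intros [f Ff]. simpl. unfold cjoin, extent. simpl.
  destruct (F_filters f Ff) as [[_ [_ [Hup [_ Hjoin]]]] _].
  split.
  - intro fc. apply NNPP. intro Hn. exact (Hjoin a b c H (fun fa => Hn (or_introl fa))
      (fun fb => Hn (or_intror fb)) fc).
  - intros [fa | fb]; [exact (Hup a c fa Hac) | exact (Hup b c fb Hbc)].
Qed.

Lemma extent_comp (Mc : condMcomp B F) a b c :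
  pcomp B a b = Some c -> extent c = bcomp complex_brdg (extent a) (extent b).
Proof.
  intro H. apply pred_ext. intros [h Fh]. simpl. unfold ccomp, extent. simpl.
  split.
  - intro hc. destruct (Mc h a b c Fh H hc) as [f [g [Ff [Fg [fa [gb R]]]]]].
    exists (exist _ f Ff), (exist _ g Fg). exact (conj fa (conj gb R)).
  - intros [[f Ff] [[g Fg] [fa [gb [Rc _]]]]]. exact (Rc a b c H fa gb).
Qed.

Lemma extent_ldiv (Ml : condMldiv B F) a b c :
  pldiv B a b = Some c -> extent c = bldiv complex_brdg (extent a) (extent b).
Proof.
  intro H. apply pred_ext. intros [g Fg]. simpl. unfold cldiv, extent. simpl.
  split.
  - intros gc [f Ff] [h Fh] [_ [Rl _]] fa. exact (Rl a b c H fa gc).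
  - intro Hall. apply NNPP. intro ngc.
    destruct (Ml g a b c Fg H ngc) as [f [h [Ff [Fh [fa [nhb R]]]]]].
    exact (nhb (Hall (exist _ f Ff) (exist _ h Fh) R fa)).
Qed.

Lemma extent_rdiv (Mr : condMrdiv B F) a b c :
  prdiv B a b = Some c -> extent c = brdiv complex_brdg (extent a) (extent b).
Proof.
  intro H. apply pred_ext. intros [f Ff]. simpl. unfold crdiv, extent. simpl.
  split.
  - intros fc [g Fg] [h Fh] [_ [_ Rr]] gb. exact (Rr a b c H fc gb).
  - intro Hall. apply NNPP. intro nfc.
    destruct (Mr f a b c Ff H nfc) as [g [h [Fg [Fh [gb [nha R]]]]]].
    exact (nha (Hall (exist _ g Fg) (exist _ h Fh) R gb)).
Qed.

Lemma extent_zero : extent (pzero B) = bzero complex_brdg.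
Proof.
  apply pred_ext. intros [f Ff]. simpl. unfold extent. simpl.
  destruct (F_filters f Ff) as [[_ [H0 _]] _]. tauto.
Qed.

Lemma extent_one : extent (pone B) = bone complex_brdg.
Proof.
  apply pred_ext. intros [f Ff]. simpl. unfold extent. simpl.
  destruct (F_filters f Ff) as [[H1 _] _]. tauto.
Qed.

End ComplexAlgebra.

Lemma complex_brdg_represents (B : pstruct) (F : (B -> Prop) -> Prop) :
  partial_bounded_lattice B -> representing_filters B F ->
  square_increasing (complex_brdg B F) /\ partial_substructure B (complex_brdg B F).
Proof.
  intros Hlat [HF [HD [Mc [Ml Mr]]]].
  split; [exact (complex_square_increasing _ _ HF) |].
  exists (extent B F).
  split; [exact (extent_inj _ _ HF Hlat HD) |].
  split; [exact (extent_meet _ _ HF Hlat) |]. split; [exact (extent_join _ _ HF Hlat) |].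
  split; [exact (extent_comp _ _ Mc) |]. split; [exact (extent_ldiv _ _ Ml) |].
  split; [exact (extent_rdiv _ _ Mr) |].
  split; [exact (extent_zero _ _ HF) |]. split; [exact (extent_one _ _ HF) |].
  exact (extent_le _ _ HF HD).
Qed.

Theorem mainTheorem15 (B : pstruct) :
  (exists A : brdg, square_increasing A /\ partial_substructure B A) <->
  (partial_bounded_lattice B /\
   exists F : (B -> Prop) -> Prop,
     (forall f, F f -> prime_filter B f /\ closed_filter B f) /\
     condD B F /\ condMcomp B F /\ condMldiv B F /\ condMrdiv B F).
Proof.
  split.
  - intros [A [Hsq [e [Hinj [Hm [Hj [Hc [Hl [Hr [H0 [H1 Hle]]]]]]]]]]].
    split; [eapply embedded_partial_bounded_lattice; eassumption |].
    exists (trace_filters B A e). eapply trace_filters_representing; eassumption.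
  - intros [Hlat [F HF]]. exists (complex_brdg B F).
    exact (complex_brdg_represents B F Hlat HF).
Qed.
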